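(* Let $V$ be an $n$-dimensional vector space over a field $K$ and $\mathcal{F}\colon\{0\}=V_0\subset V_1\subset\cdots\subset V_n=V$ a chain of subspaces with $\dim V_i=i$. Let $U\le V$ be a subspace, $v\mapsto\overline v$ the canonical map $V\to\overline V:=V/U$, $P$ the stabilizer of $U$ in $\mathrm{Aut}(V)$, and $\pi\colon P\to\mathrm{Aut}(\overline V)$ the epimorphism $\pi(f)(\overline v)=\overline{f(v)}$. Then $\pi$ maps $\mathrm{stab}_P(\mathcal{F})$ onto $\mathrm{stab}_{\mathrm{Aut}(\overline V)}(\overline{\mathcal{F}})$, where $\overline{\mathcal{F}}$ is the chain $0=\overline V_0\subseteq\overline V_1\subseteq\cdots\subseteq\overline V_n=\overline V$.
   Context: $\mathrm{stab}_H(\mathcal{F})$ denotes the set of elements of $H$ mapping each member of the chain onto itself; $\overline{V}_i$ is the image of $V_i$ in $V/U$. *)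

From HB Require Import structures.
From mathcomp Require Import all_boot all_algebra.
Set Implicit Arguments. Unset Strict Implicit. Unset Printing Implicit Defensive.
Import GRing.Theory.
Local Open Scope ring_scope.

Definition isAut (K : fieldType) (vT : vectType K) (f : 'End(vT)) : bool :=
  (lker f == 0)%VS && (limg f == fullv)%VS.

(* Given the canonical surjection q : V -> V/U, the induced map
   pi(f)(q v) = q (f v), written as q \o f \o q^-1, where q^-1 is a linear
   right inverse of q on its (full) image. *)
Definition piq (K : fieldType) (vT wT : vectType K) (q : 'Hom(vT, wT))
  (f : 'End(vT)) : 'End(wT) := (q \o f \o q^-1)%VF.

From HB Require Import structures.
From mathcomp Require Import all_boot all_algebra.

(* pi(f) = q \o f \o q^-1 satisfies pi(f) \o q = q \o f as soon as f preserves
   U = ker q, which gives the inclusion.  Conversely, given g stabilising the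
   image flag, pick a basis e_j in V_(j+1) \ V_j adapted to the flag, with
   e_j in U whenever U meets V_(j+1) outside V_j, and lift g (q e_j) to some
   y_j in V_(j+1) \ V_j (y_j = e_j when e_j is in U).  The linear map
   e_j |-> y_j stabilises the flag, hence is an automorphism, preserves U
   because q \o f = g \o q, and induces g. *)

Set Implicit Arguments.
Unset Strict Implicit.
Unset Printing Implicit Defensive.

Import GRing.Theory.
Local Open Scope ring_scope.

Section Automorphisms.
Variables (K : fieldType) (vT : vectType K).
Implicit Types (f : 'End(vT)) (U : {vspace vT}).

Lemma isAutE f : isAut f = (limg f == fullv).
Proof.
rewrite /isAut andbC; case: eqP => //= imf.
have := limg_ker_dim f fullv; rewrite capfv imf -{2}[\dim fullv]add0n.
by move/addIn/eqP; rewrite dimv_eq0.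
Qed.

Lemma isAut_img_eq f U : isAut f -> (f @: U <= U)%VS -> (f @: U)%VS = U.
Proof.
case/andP=> /eqP kerf _ fUU; apply/eqP.
by rewrite eqEdim fUU limg_dim_eq ?leqnn // kerf capv0.
Qed.

End Automorphisms.

Lemma free_lfun_extension (K : fieldType) (vT wT : vectType K)
    (s : seq vT) (y : nat -> wT) :
  free s -> exists f : 'Hom(vT, wT), forall i, (i < size s)%N -> f s`_i = y i.
Proof.
move=> free_s; pose t := in_tuple s.
pose h v := \sum_(i < size s) coord t i v *: y i.
have h_lin : linear h.
  move=> a u v; rewrite /h scaler_sumr -big_split /=; apply: eq_bigr => i _.
  by rewrite linearP /= scalerDl scalerA.
pose hL : {linear vT -> wT} := HB.pack h (GRing.isLinear.Build _ _ _ _ h h_lin).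
exists (linfun hL) => i lt_i_s; pose i' := Ordinal lt_i_s.
have coord_si j : coord t j s`_i = (i' == j)%:R.
  by rewrite -[s`_i]/(t`_i') coord_free.
rewrite lfunE /= /h (bigD1 i') //= coord_si eqxx scale1r big1 ?addr0 //.
by move=> j /negbTE neq_ji; rewrite coord_si eq_sym neq_ji scale0r.
Qed.

Section InducedMap.
Variables (K : fieldType) (vT wT : vectType K) (q : 'Hom(vT, wT)).
Hypothesis q_surj : limg q = fullv.
Implicit Types (f : 'End(vT)) (g : 'End(wT)).

Lemma piqE f w : piq q f w = q (f ((q^-1)%VF w)).
Proof. by rewrite /piq !comp_lfunE. Qed.

Lemma piq_comp f : (f @: lker q <= lker q)%VS -> (piq q f \o q = q \o f)%VF.
Proof.
move=> fker; apply/lfunP => v; rewrite !comp_lfunE; apply/eqP.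
rewrite -subr_eq0 -!linearB -memv_ker (subvP fker) // memv_img // memv_ker.
by rewrite linearB /= limg_lfunVK ?subrr // q_surj memvf.
Qed.

Lemma piq_eq f g : (g \o q = q \o f)%VF -> piq q f = g.
Proof.
move=> gq; apply/lfunP => w.
have qK : q ((q^-1)%VF w) = w by rewrite limg_lfunVK // q_surj memvf.
by rewrite piqE -[in RHS]qK -[RHS]comp_lfunE gq comp_lfunE.
Qed.

Lemma piq_img f W : (f @: lker q <= lker q)%VS ->
  (piq q f @: (q @: W))%VS = (q @: (f @: W))%VS.
Proof. by move=> fker; rewrite -!limg_comp piq_comp. Qed.

Lemma isAut_piq f : isAut f -> (f @: lker q <= lker q)%VS -> isAut (piq q f).
Proof.
rewrite !isAutE => /eqP f_surj fker.
by rewrite -{1}q_surj piq_img // f_surj q_surj.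
Qed.

End InducedMap.

Section CompleteFlag.
Variables (K : fieldType) (vT : vectType K) (n : nat) (V : nat -> {vspace vT}).
Hypothesis V0 : V 0 = 0%VS.
Hypothesis V_incr : forall i, (i < n)%N -> (V i <= V i.+1)%VS.
Hypothesis dimV : forall i, (i <= n)%N -> \dim (V i) = i.
Hypothesis Vn : V n = fullv.

Definition adapted j x := (x \in V j.+1) && (x \notin V j).

Lemma flag_step j x : (j < n)%N -> adapted j x -> V j.+1 = (V j + <[x]>)%VS.
Proof.
move=> ltjn /andP[xVj1 xNVj]; apply/eqP; rewrite eq_sym eqEdim.
rewrite subv_add V_incr // -memvE xVj1 dimV //=.
rewrite -[j in (j < _)%N](dimV (ltnW ltjn)).
by rewrite (ltn_leqif (dimv_leqif_sup (addvSl _ _))) subv_add subvv -memvE.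
Qed.

Lemma exists_adapted j : (j < n)%N -> exists x, adapted j x.
Proof.
move=> ltjn; have: ~~ (V j.+1 <= V j)%VS.
  by apply/negP => /dimvS; rewrite !dimV ?ltnn // ltnW.
by case/subvPn => x xVj1 xNVj; exists x; rewrite /adapted xVj1 xNVj.
Qed.

Lemma exists_adapted_in U j : (j < n)%N ->
  exists x, adapted j x && ((U :&: V j.+1 <= V j)%VS || (x \in U)).
Proof.
move=> ltjn; case: (boolP (U :&: V j.+1 <= V j)%VS) => [UV | /subvPn[x]].
  by have [x x_ad] := exists_adapted ltjn; exists x; rewrite x_ad.
by case/memv_capP => xU xVj1 xNVj; exists x; rewrite /adapted xVj1 xNVj xU orbT.
Qed.

Lemma flag_span e : (forall j, (j < n)%N -> adapted j (e j)) ->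
  forall j, (j <= n)%N -> V j = <<mkseq e j>>%VS.
Proof.
move=> e_ad; elim=> [|j IHj] ltjn; first by rewrite V0 span_nil.
rewrite (flag_step ltjn (e_ad j ltjn)) (IHj (ltnW ltjn)) -addn1 /mkseq iotaD.
by rewrite map_cat span_cat span_seq1.
Qed.

Lemma flag_stable (f : 'End(vT)) e :
    (forall j, (j < n)%N -> adapted j (e j)) ->
    (forall j, (j < n)%N -> adapted j (f (e j))) ->
  forall j, (j <= n)%N -> (f @: V j)%VS = V j.
Proof.
move=> e_ad fe_ad; elim=> [|j IHj] ltjn; first by rewrite V0 limg0.
rewrite {1}(flag_step ltjn (e_ad j ltjn)) limgD (IHj (ltnW ltjn)) limg_line.
by rewrite -(flag_step ltjn (fe_ad j ltjn)).
Qed.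

Lemma flag_basis e : (forall j, (j < n)%N -> adapted j (e j)) ->
  basis_of fullv (mkseq e n).
Proof.
move=> e_ad; rewrite basisEdim size_mkseq -(flag_span e_ad (leqnn n)) Vn subvv.
by rewrite -Vn dimV ?leqnn.
Qed.

Section Lifting.
Variables (wT : vectType K) (q : 'Hom(vT, wT)) (g : 'End(wT)).
Hypothesis q_surj : limg q = fullv.
Hypothesis g_inj : lker g == 0%VS.
Hypothesis g_stable :
  forall i, (i <= n)%N -> (g @: (q @: V i))%VS = (q @: V i)%VS.

Lemma lift_adapted j x : (j < n)%N -> adapted j x ->
    (lker q :&: V j.+1 <= V j)%VS || (x \in lker q) ->
  exists y, adapted j y && (q y == g (q x)).
Proof.
move=> ltjn x_ad; case: (boolP (x \in lker q)) => [xker _ | xNker].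
  exists x; move: xker; rewrite memv_ker x_ad => /eqP->.
  by rewrite linear0 eqxx.
rewrite orbF => kerV; case/andP: x_ad => xVj1 xNVj.
(* As ker q does not grow from V j to V j.+1 and g preserves q @: V j,
   no preimage of g (q x) in V j.+1 can lie in V j. *)
have: g (q x) \in (q @: V j.+1)%VS by rewrite -g_stable // !memv_img.
case/memv_imgP => y yVj1 qy; exists y; rewrite /adapted yVj1 -qy eqxx andbT /=.
apply: contra xNVj => yVj.
have: q x \in (q @: V j)%VS.
  rewrite memvE -(limg_ker0 _ _ g_inj) limg_line qy -memvE.
  by rewrite (g_stable (ltnW ltjn)) memv_img.
case/memv_imgP => v vVj qxv; rewrite -[x](subrK v) rpredD //.
apply: (subvP kerV); rewrite memv_cap memv_ker linearB /= qxv subrr eqxx.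
by rewrite rpredB // (subvP (V_incr ltjn)).
Qed.

Lemma piq_flag_stab_onto : exists f : 'End(vT),
  [/\ isAut f, (f @: lker q)%VS = lker q,
      forall i, (i <= n)%N -> (f @: V i)%VS = V i & piq q f = g].
Proof.
have lift_pair j : exists p : vT * vT, (j < n)%N ==>
    [&& adapted j p.1, adapted j p.2 & q p.2 == g (q p.1)].
  case: (ltnP j n) => [ltjn | _]; last by exists 0.
  have [x /andP[x_ad x_ker]] := exists_adapted_in (lker q) ltjn.
  have [y /andP[y_ad qy]] := lift_adapted ltjn x_ad x_ker.
  by exists (x, y); rewrite x_ad y_ad qy.
pose e j := (xchoose (lift_pair j)).1; pose y j := (xchoose (lift_pair j)).2.
have lift_spec j : (j < n)%N ->
    [&& adapted j (e j), adapted j (y j) & q (y j) == g (q (e j))].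
  exact/implyP/(xchooseP (lift_pair j)).
have e_ad j (ltjn : (j < n)%N) : adapted j (e j).
  by case/and3P: (lift_spec j ltjn).
have e_basis := flag_basis e_ad.
have [f fe] := free_lfun_extension y (basis_free e_basis).
have f_e j : (j < n)%N -> f (e j) = y j.
  by move=> ltjn; rewrite -(nth_mkseq 0 e ltjn) fe ?size_mkseq.
have fV : forall i, (i <= n)%N -> (f @: V i)%VS = V i.
  apply: flag_stable e_ad _ => j ltjn.
  by rewrite f_e //; case/and3P: (lift_spec j ltjn).
have span_e : <<mkseq e n>>%VS = fullv by rewrite -(flag_span e_ad (leqnn n)).
have qf : (g \o q = q \o f)%VF.
  apply/(fullv_lfunP _ _ span_e) => x /mapP[j].
  rewrite mem_iota => /andP[_ ltjn] ->.
  by rewrite !comp_lfunE f_e //; case/and3P: (lift_spec j ltjn) => _ _ /eqP.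
have f_aut : isAut f by rewrite isAutE -Vn fV.
exists f; split => //; last exact: piq_eq.
apply: isAut_img_eq => //; apply/subvP => x /memv_imgP[u].
rewrite !memv_ker => /eqP qu ->.
by rewrite -comp_lfunE -qf comp_lfunE qu linear0.
Qed.

End Lifting.

End CompleteFlag.

Theorem lemma7p5 (K : fieldType) (vT wT : vectType K) (n : nat)
  (hn : \dim {:vT} = n)
  (Vc : nat -> {vspace vT})
  (hV0 : Vc 0 = 0%VS)
  (hVinc : forall i, (i < n)%N -> (Vc i <= Vc i.+1)%VS)
  (hVdim : forall i, (i <= n)%N -> \dim (Vc i) = i)
  (hVn : Vc n = fullv)
  (U : {vspace vT})
  (q : 'Hom(vT, wT)) (hqsurj : limg q = fullv) (hqker : lker q = U) :
  (forall f : 'End(vT),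
      isAut f -> (f @: U)%VS = U -> (forall i, (i <= n)%N -> (f @: Vc i)%VS = Vc i) ->
      isAut (piq q f) /\
      (forall i, (i <= n)%N -> (piq q f @: (q @: Vc i))%VS = (q @: Vc i)%VS)) /\
  (forall g : 'End(wT),
      isAut g -> (forall i, (i <= n)%N -> (g @: (q @: Vc i))%VS = (q @: Vc i)%VS) ->
      exists f : 'End(vT),
        [/\ isAut f, (f @: U)%VS = U,
            (forall i, (i <= n)%N -> (f @: Vc i)%VS = Vc i) & piq q f = g]).
Proof.
subst U; split.
  move=> f f_aut fU fV; have fker : (f @: lker q <= lker q)%VS by rewrite fU.
  split; first exact: isAut_piq.
  by move=> i lein; rewrite piq_img // fV.
move=> g /andP[g_inj _] g_stable.
exact: (piq_flag_stab_onto hV0 hVinc hVdim hVn hqsurj g_inj g_stable).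
Qed.
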